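(* Let $T$ be a tree (without loops) and $e=uv$ an edge of $T$. Then $\nu_2(T)-\nu_2(T\setminus e)\in\{0,1\}$; moreover $\nu_2(T)-\nu_2(T\setminus e)=0$ if and only if $u$ or $v$ is saturated in $T\setminus e$, and $\nu_2(T)-\nu_2(T\setminus e)=1$ if and only if $e$ is saturated in $T$.
   Context: A $2$-matching of a graph $G$ is a set of edges such that every vertex is incident to at most two of them; $\nu_2(G)$ is the maximum size of a $2$-matching and a $2$-matching of that size is called maximum. A vertex $w$ is saturated in $G$ if every maximum $2$-matching of $G$ has exactly two edges incident to $w$; an edge is saturated in $G$ if it belongs to every maximum $2$-matching of $G$. $T\setminus e$ denotes $T$ with the edge $e$ deleted (a forest). *)

(* A finite simple graph on a finType T is a symmetric,
   irreflexive relation g : rel T; edges are 2-element vertex sets. *)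
From mathcomp Require Import all_boot.
Set Implicit Arguments. Unset Strict Implicit. Unset Printing Implicit Defensive.

Section Graphs.
Variable T : finType.

Definition simple_graph (g : rel T) : Prop := symmetric g /\ irreflexive g.

Definition edges (g : rel T) : {set {set T}} :=
  [set f : {set T} | [exists x, exists y, g x y && (f == [set x; y])]].

(* a tree: connected, simple, and with no cycle (a cycle being a closed
   walk through >= 3 pairwise distinct vertices) *)
Definition tree (g : rel T) : Prop :=
  simple_graph g /\ (forall x y, connect g x y) /\
  (forall c : seq T, ucycle g c -> size c < 3).

Definition del_edge (g : rel T) (u v : T) : rel T :=
  fun x y => g x y && ([set x; y] != [set u; v]).

Definition inc (M : {set {set T}}) (w : T) : {set {set T}} :=
  [set f in M | w \in f].

Definition two_matching (g : rel T) (M : {set {set T}}) : bool :=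
  (M \subset edges g) && [forall w, #|inc M w| <= 2].

Definition nu2 (g : rel T) : nat :=
  \max_(M : {set {set T}} | two_matching g M) #|M|.

Definition max_two_matching (g : rel T) (M : {set {set T}}) : Prop :=
  two_matching g M /\ #|M| = nu2 g.

Definition saturated_vertex (g : rel T) (w : T) : Prop :=
  forall M, max_two_matching g M -> #|inc M w| = 2.

Definition saturated_edge (g : rel T) (f : {set T}) : Prop :=
  forall M, max_two_matching g M -> f \in M.

End Graphs.

From Stdlib Require Import Classical.
From mathcomp Require Import all_boot zify.

Set Implicit Arguments. Unset Strict Implicit. Unset Printing Implicit Defensive.

(* Deleting e = uv can only lose the edge e itself, so nu2 drops by at most
   one, and it drops exactly when every maximum 2-matching of T uses e.
   Removing e from such a matching leaves a maximum 2-matching of T \ e in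
   which u and v have degree at most 1, so neither is saturated.  Conversely,
   if neither u nor v is saturated in T \ e, take maximum 2-matchings A and B
   with deg_A u <= 1 and deg_B v <= 1.  As u and v lie in different components
   of the forest T \ e, the edges of A inside the component of u together with
   the edges of B outside it form again a maximum 2-matching, now of degree at
   most 1 at both u and v, and adding e to it shows that nu2 drops. *)

Section TwoMatchings.
Variable T : finType.
Implicit Types (h : rel T) (M A B : {set {set T}}) (f : {set T}) (w : T).

Lemma edge_in_edges h x y : h x y -> [set x; y] \in edges h.
Proof.
by move=> hxy; rewrite inE; apply/existsP; exists x; apply/existsP; exists y; rewrite hxy eqxx.
Qed.

Lemma two_matching_sub h M : two_matching h M -> M \subset edges h.
Proof. by case/andP. Qed.

Lemma two_matching_inc h M w : two_matching h M -> #|inc M w| <= 2.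
Proof. by case/andP=> _ /forallP. Qed.

Lemma two_matching0 h : two_matching h set0.
Proof.
apply/andP; split; first exact: sub0set.
apply/forallP => w; rewrite (_ : inc set0 w = set0) ?cards0 //.
by apply/setP => f; rewrite !inE.
Qed.

Lemma leq_card_nu2 h M : two_matching h M -> #|M| <= nu2 h.
Proof. exact: leq_bigmax_cond. Qed.

Lemma max_two_matching_exists h : exists M, max_two_matching h M.
Proof.
rewrite /max_two_matching /nu2 (bigmax_eq_arg set0) ?two_matching0 //.
by case: arg_maxnP => [|M tmM _]; [exact: two_matching0 | exists M].
Qed.

Lemma unsaturated_vertexP h w :
  ~ saturated_vertex h w -> exists2 A, max_two_matching h A & #|inc A w| <= 1.
Proof.
move=> unsat; apply: NNPP => noA; apply: unsat => A maxA.
have := two_matching_inc w maxA.1; rewrite leq_eqVlt ltnS => /orP[/eqP // | le1].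
by case: noA; exists A.
Qed.

Lemma card_inc_setU1 f M w : #|inc (f |: M) w| <= (w \in f) + #|inc M w|.
Proof.
case: (boolP (w \in f)) => wf.
  apply: leq_trans (subset_leq_card (_ : _ \subset f |: inc M w)) _.
    by apply/subsetP => f'; rewrite !inE => /andP[/orP[->|->] ->]; rewrite ?orbT.
  by rewrite cardsU1 leq_add2r leq_b1.
apply: subset_leq_card; apply/subsetP => f'; rewrite !inE.
case/andP=> /orP[/eqP-> wf' | fM wf']; [by rewrite wf' in wf | by rewrite fM].
Qed.

Lemma card_inc_setD1 f M w : f \in M -> w \in f -> #|inc (M :\ f) w| < #|inc M w|.
Proof.
move=> fM wf; apply: proper_card; apply/properP; split.
  by apply/subsetP => f'; rewrite !inE => /andP[/andP[_ ->] ->].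
by exists f; [rewrite in_set fM wf | rewrite !inE eqxx].
Qed.

Section Splice.
Variables (h : rel T) (S : {set T}).
Hypothesis closedS : closed h S.

Definition splice A B := (A :&: powerset S) :|: (B :\: powerset S).

Lemma card_splice A B : #|splice A B| + #|splice B A| = #|A| + #|B|.
Proof.
have disj X Y : (X :&: powerset S) :&: (Y :\: powerset S) = set0.
  by apply/setP => f; rewrite !inE; case: (f \subset S); rewrite ?andbF.
rewrite !cardsU !disj !cards0 !subn0 -(cardsID (powerset S) A) -(cardsID (powerset S) B).
by rewrite addnACA [RHS]addnACA [#|B :\: _| + _]addnC.
Qed.

Lemma edge_sub_closed f w : f \in edges h -> w \in f -> w \in S -> f \subset S.
Proof.
rewrite inE => /existsP[x /existsP[y /andP[hxy /eqP->]]].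
rewrite subUset !sub1set !inE => /orP[]/eqP-> wS.
  by rewrite -(closedS hxy) wS.
by rewrite (closedS hxy) wS.
Qed.

Lemma inc_splice A B w :
  B \subset edges h -> inc (splice A B) w \subset inc (if w \in S then A else B) w.
Proof.
move=> sB; apply/subsetP => f; rewrite !inE.
case/andP=> /orP[/andP[fA fS] | /andP[fS fB]] wf; case: ifP => wS.
- by rewrite fA wf.
- by rewrite (subsetP fS w wf) in wS.
- by rewrite (edge_sub_closed (subsetP sB f fB) wf wS) in fS.
- by rewrite fB wf.
Qed.

Lemma two_matching_splice A B :
  two_matching h A -> two_matching h B -> two_matching h (splice A B).
Proof.
move=> tmA tmB; apply/andP; split.
  rewrite subUset (subset_trans (subsetIl _ _) (two_matching_sub tmA)).
  by rewrite (subset_trans (subsetDl _ _) (two_matching_sub tmB)).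
apply/forallP => w.
apply: leq_trans (subset_leq_card (inc_splice A w (two_matching_sub tmB))) _.
by case: ifP => _; [exact: two_matching_inc tmA | exact: two_matching_inc tmB].
Qed.

Lemma max_two_matching_splice A B :
  max_two_matching h A -> max_two_matching h B -> max_two_matching h (splice A B).
Proof.
move=> [tmA cardA] [tmB cardB]; split; first exact: two_matching_splice.
have := card_splice A B.
have := leq_card_nu2 (two_matching_splice tmA tmB).
have := leq_card_nu2 (two_matching_splice tmB tmA); lia.
Qed.

End Splice.

Section DeleteEdge.
Variables (g : rel T) (u v : T).
Local Notation g' := (del_edge g u v).
Local Notation e := [set u; v].

Lemma del_edge_sym : symmetric g -> symmetric g'.
Proof. by move=> sym x y; rewrite /del_edge sym setUC. Qed.

Lemma edges_del_edge : edges g' = edges g :\ e.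
Proof.
apply/setP => f; rewrite !inE; apply/existsP/andP.
- case=> x /existsP[y /andP[/andP[gxy ne] /eqP->]]; split => //.
  by apply/existsP; exists x; apply/existsP; exists y; rewrite gxy eqxx.
- case=> ne /existsP[x /existsP[y /andP[gxy /eqP E]]].
  by exists x; apply/existsP; exists y; rewrite /del_edge gxy -E ne eqxx.
Qed.

Lemma edge_notin_two_matching_del_edge M : two_matching g' M -> e \notin M.
Proof.
move/two_matching_sub => sM; apply/negP => /(subsetP sM).
by rewrite edges_del_edge !inE eqxx.
Qed.

Lemma two_matching_del_edge M : two_matching g' M -> two_matching g M.
Proof.
case/andP=> sM degM; apply/andP; split => //.
by apply: subset_trans sM _; rewrite edges_del_edge subD1set.
Qed.

Lemma two_matching_setD1 M : two_matching g M -> two_matching g' (M :\ e).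
Proof.
case/andP=> sM /forallP degM; apply/andP; split; first by rewrite edges_del_edge setSD.
apply/forallP => w; apply: leq_trans (degM w); apply: subset_leq_card.
by apply/subsetP => f; rewrite !inE => /andP[/andP[_ ->] ->].
Qed.

Lemma two_matching_setU1 M :
  g u v -> two_matching g' M -> #|inc M u| <= 1 -> #|inc M v| <= 1 ->
  two_matching g (e |: M).
Proof.
move=> guv tmM Mu Mv; apply/andP; split.
  by rewrite subUset sub1set edge_in_edges // two_matching_sub ?two_matching_del_edge.
apply/forallP => w; apply: leq_trans (card_inc_setU1 _ _ _) _.
case: (boolP (w \in e)) => [| _]; last exact: two_matching_inc tmM.
by rewrite !inE => /orP[]/eqP->; rewrite add1n ltnS.
Qed.

Lemma nu2_del_edge_leq : nu2 g' <= nu2 g.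
Proof.
have [M [tmM <-]] := max_two_matching_exists g'.
exact/leq_card_nu2/two_matching_del_edge.
Qed.

Lemma nu2_leq_del_edgeS : nu2 g <= (nu2 g').+1.
Proof.
have [M [tmM <-]] := max_two_matching_exists g.
rewrite (cardsD1 e M) -add1n leq_add ?leq_b1 //.
exact/leq_card_nu2/two_matching_setD1.
Qed.

Lemma edge_in_max_two_matching M :
  nu2 g = (nu2 g').+1 -> max_two_matching g M -> e \in M.
Proof.
move=> drop [tmM cardM]; apply/negPn/negP => eM.
have := leq_card_nu2 (two_matching_setD1 tmM).
by rewrite (cardsD1 e M) (negbTE eM) add0n in cardM; rewrite cardM drop ltnn.
Qed.

Lemma nu2_del_edgeS_saturated_edge : nu2 g = (nu2 g').+1 <-> saturated_edge g e.
Proof.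
split => [drop M | sat]; first exact: edge_in_max_two_matching.
apply/eqP; rewrite eqn_leq nu2_leq_del_edgeS ltn_neqAle nu2_del_edge_leq andbT.
apply/eqP => E; have [M [tmM cardM]] := max_two_matching_exists g'.
have/negP[] := edge_notin_two_matching_del_edge tmM.
by apply: sat; split; [exact: two_matching_del_edge | rewrite cardM E].
Qed.

Lemma max_two_matching_setD1 M :
  nu2 g = (nu2 g').+1 -> max_two_matching g M -> max_two_matching g' (M :\ e).
Proof.
move=> drop maxM; have eM := edge_in_max_two_matching drop maxM.
case: maxM => tmM cardM; split; first exact: two_matching_setD1.
by apply/eqP; rewrite -eqSS -drop -cardM (cardsD1 e M) eM.
Qed.

Lemma nu2_leq_del_edge_saturated w :
  saturated_vertex g' w -> w \in e -> nu2 g <= nu2 g'.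
Proof.
move=> sat we; rewrite leqNgt; apply/negP => lt.
have drop : nu2 g = (nu2 g').+1 by apply/eqP; rewrite eqn_leq lt nu2_leq_del_edgeS.
have [M maxM] := max_two_matching_exists g.
have degMe := sat _ (max_two_matching_setD1 drop maxM).
have := card_inc_setD1 (edge_in_max_two_matching drop maxM) we.
by rewrite degMe ltnNge (two_matching_inc w maxM.1).
Qed.

Lemma nu2_del_edgeS_of_unsaturated :
  symmetric g -> g u v -> ~~ connect g' u v ->
  ~ saturated_vertex g' u -> ~ saturated_vertex g' v -> nu2 g = (nu2 g').+1.
Proof.
move=> sym guv uv_sep /unsaturated_vertexP[A maxA Au] /unsaturated_vertexP[B maxB Bv].
pose S := [set x | connect g' u x].
have closedS : closed g' S.
  move=> x y gxy; rewrite !inE; apply: connect_closed gxy.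
  exact/sym_connect_sym/del_edge_sym.
have [tmC cardC] := max_two_matching_splice closedS maxA maxB.
have degC w := subset_leq_card (inc_splice closedS A w (two_matching_sub maxB.1)).
have Cu : #|inc (splice S A B) u| <= 1 by apply: leq_trans (degC u) _; rewrite inE connect0.
have Cv : #|inc (splice S A B) v| <= 1.
  by apply: leq_trans (degC v) _; rewrite inE (negbTE uv_sep).
have := leq_card_nu2 (two_matching_setU1 guv tmC Cu Cv).
rewrite cardsU1 edge_notin_two_matching_del_edge // cardC.
have := nu2_leq_del_edgeS; lia.
Qed.

Lemma tree_del_edge_disconnected : tree g -> g u v -> ~~ connect g' u v.
Proof.
move=> [[sym irr] [_ acyc]] guv; apply/negP => /connectP[p gp lastp].
case: (shortenP gp) lastp => q gq uq _ lastq.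
case: q gq uq lastq => [|x [|y r]] gq uq /= lastq.
- by move: guv; rewrite lastq irr.
- by move: gq; rewrite -lastq /= /del_edge eqxx andbF.
- suff : size [:: u, x, y & r] < 3 by [].
  apply/acyc/andP; split; last exact: uq.
  rewrite /cycle rcons_path.
  rewrite (sub_path _ gq) => [|a b /andP[] //].
  by rewrite /= -lastq sym.
Qed.

End DeleteEdge.
End TwoMatchings.

Theorem lemma2p4 (T : finType) (g : rel T) (u v : T) :
  tree g -> g u v ->
  (nu2 g = nu2 (del_edge g u v) \/ nu2 g = (nu2 (del_edge g u v)).+1) /\
  (nu2 g = nu2 (del_edge g u v) <->
     saturated_vertex (del_edge g u v) u \/ saturated_vertex (del_edge g u v) v) /\
  (nu2 g = (nu2 (del_edge g u v)).+1 <-> saturated_edge g [set u; v]).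
Proof.
move=> tr guv; have [[sym _] _] := tr.
have le := nu2_del_edge_leq g u v; have leS := nu2_leq_del_edgeS g u v.
have dropS := nu2_del_edgeS_of_unsaturated sym guv (tree_del_edge_disconnected tr guv).
split; first lia.
split; last exact: nu2_del_edgeS_saturated_edge.
split => [E | sat].
- apply: NNPP => /not_or_and[unsat_u unsat_v].
  by have := dropS unsat_u unsat_v; lia.
- suff : nu2 g <= nu2 (del_edge g u v) by lia.
  by case: sat => /nu2_leq_del_edge_saturated; apply; rewrite !inE eqxx ?orbT.
Qed.
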